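(* Let $k\geq 2$ be an integer, let $G$ be a graph of order $n$, and let $v$ be a vertex of $G$. Suppose $G$ contains no path on $2k+1$ vertices (as a subgraph) both of whose endvertices are different from $v$. Then \[ 2e(G)-d_{v}\leq (2k-1)(n-1), \] unless $G$ is the disjoint union of zero or more copies of $K_{2k}$ and one copy of $K_{2k}+v$.
   Context: All graphs are finite and simple. $e(G)$ is the number of edges of $G$ and $d_v$ is the degree of $v$. $K_{2k}$ is the complete graph on $2k$ vertices, and $K_{2k}+v$ denotes the graph on $2k+1$ vertices obtained by joining the vertex $v$ by a single edge to exactly one vertex of a complete graph $K_{2k}$. *)

From mathcomp Require Import all_boot.
Set Implicit Arguments. Unset Strict Implicit. Unset Printing Implicit Defensive.

Definition simple_graph (T : finType) (e : rel T) : Prop :=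
  symmetric e /\ irreflexive e.

Definition num_edges (T : finType) (e : rel T) : nat :=
  #|[set A : {set T} | [exists x, exists y, e x y && (A == [set x; y])]]|.

Definition deg (T : finType) (e : rel T) (v : T) : nat := #|[set w | e v w]|.

Definition is_path_on (T : finType) (e : rel T) (m : nat) (s : seq T) : bool :=
  [&& size s == m, uniq s &
      if s is x :: p then path e x p else false].

Definition has_path_avoiding_ends (T : finType) (e : rel T) (m : nat) (v : T) : Prop :=
  exists (x : T) (p : seq T),
    [/\ is_path_on e m (x :: p), x != v & last x p != v].

Definition clique (T : finType) (e : rel T) (B : {set T}) : Prop :=
  forall x y, x \in B -> y \in B -> x != y -> e x y.

(* G is the disjoint union of zero or more copies of K_{2k} and one copy of
   K_{2k}+v (the pendant vertex being v): the vertex set is partitioned into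
   blocks with no edges between distinct blocks; every block not containing v
   induces K_{2k}; the block containing v has 2k+1 vertices, removing v leaves
   a clique, and v has exactly one neighbour (inside its block). *)
Definition exceptional_graph (T : finType) (e : rel T) (k : nat) (v : T) : Prop :=
  exists P : {set {set T}},
    [/\ partition P [set: T],
        (forall B1 B2 x y, B1 \in P -> B2 \in P -> B1 != B2 ->
            x \in B1 -> y \in B2 -> ~~ e x y),
        (forall B, B \in P -> v \notin B -> #|B| = (2 * k)%N /\ clique e B)
      & (forall B, B \in P -> v \in B ->
            [/\ #|B| = (2 * k).+1, clique e (B :\ v) & #|[set w | e v w]| = 1%N])].

From mathcomp Require Import all_boot zify.
Set Implicit Arguments. Unset Strict Implicit. Unset Printing Implicit Defensive.

(* Induct on the vertex set S of an induced subgraph containing v: either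
   2e(G[S]) - d_v <= (2k-1)(|S|-1) or G[S] is exceptional.  A vertex u <> v with
   2 d(u) <= 2k - 1 + [u ~ v] can simply be deleted.  Otherwise G[S] - v has
   minimum degree >= k and no path on 2k+1 vertices, so by the Erdos-Gallai
   longest-path argument each of its components D is spanned by a cycle on at
   most 2k vertices.  Deleting D costs at most |D|(|D|-1) + |N(v) /\ D| <=
   (2k-1)|D|, with equality only if D is a K_2k meeting N(v); and a 2k-cycle
   through a neighbour of v makes it the only neighbour of v, since a second one
   would yield a path on 2k+1 vertices with both ends different from v. *)

Lemma crossing_pair (T : Type) (x0 : T) (p : seq T) (a b : pred T) :
  size p < count a p + count b (belast x0 p) ->
  exists p1 y r, [/\ p = p1 ++ y :: r, a y & b (last x0 p1)].
Proof.
elim: p x0 => [|y p IHp] x0 //=.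
have [/andP[ay bx0] _ | not_both lt_p] := boolP (a y && b x0).
  by exists [::], y, p.
have [|p1 [z [r [-> az bz]]]] := IHp y.
  by move: not_both lt_p; case: (a y); case: (b x0) => //=; lia.
by exists (y :: p1), z, r.
Qed.

Section SymmetricPaths.
Variables (T : eqType) (e : rel T).
Hypothesis esym : symmetric e.

Lemma rev_path_sym x p : path e x p = path e (last x p) (rev (belast x p)).
Proof. by rewrite rev_path; apply: eq_path => a b; rewrite /= esym. Qed.

Lemma rev_sorted_sym s : sorted e (rev s) = sorted e s.
Proof. by rewrite rev_sorted; apply: eq_sorted => a b; rewrite /= esym. Qed.

Lemma path_crossing_cycle x p :
  path e x p -> size p < count (e x) p + count (e^~ (last x p)) (belast x p) ->
  exists2 c, perm_eq c (x :: p) & cycle e c.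
Proof.
move=> exp lt_p; have [p1 [y [r [Ep exy lp1]]]] := crossing_pair lt_p.
exists (x :: p1 ++ rev (y :: r)); first by rewrite Ep perm_cons perm_cat2l perm_rev.
move: exp lp1; rewrite Ep last_cat /= cat_path => /andP[exp1 /= /andP[_ eyr]] lp1.
rewrite rcons_cat cat_path exp1 lastI rev_rcons /= rcons_path lp1 -rev_path_sym eyr.
by case: (r) => [|r0 r'] /=; rewrite ?rev_cons ?last_rcons esym.
Qed.
End SymmetricPaths.

Lemma longest_seq (T : finType) (P : pred (seq T)) (b : nat) (s0 : seq T) :
  P s0 -> (forall s, P s -> size s <= b) ->
  exists2 s, P s & forall s', P s' -> size s' <= size s.
Proof.
move=> Ps0 boundP.
pose Q n := [exists t : n.-tuple T, P t].
have exQ : exists n, Q n by exists (size s0); apply/existsP; exists (in_tuple s0).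
have ubQ n : Q n -> n <= b by case/existsP=> t /boundP; rewrite size_tuple.
case: (ex_maxnP exQ ubQ) => n /existsP[t Pt] maxQ.
exists (tval t) => // s Ps; rewrite size_tuple; apply: maxQ.
by apply/existsP; exists (in_tuple s).
Qed.

Lemma sum_indicator (T : finType) (A : {set T}) (P : pred T) :
  \sum_(u in A) (P u : nat) = #|[set u in A | P u]|.
Proof.
rewrite -sum1_card [RHS]big_mkcond [LHS]big_mkcond; apply: eq_bigr => u _.
by rewrite inE; case: (u \in A); case: (P u).
Qed.

Lemma card_le_count (T : finType) (A : {set T}) (s : seq T) (a : pred T) :
  {subset A <= s} -> {in A, forall x, a x} -> #|A| <= count a s.
Proof.
move=> As aA; rewrite -size_filter; apply: leq_trans (card_size _).
by apply/subset_leq_card/subsetP => x xA; rewrite mem_filter aA ?As.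
Qed.

Lemma cycle_sorted (T : Type) (e : rel T) c : cycle e c -> sorted e c.
Proof. by case: c => //= x p; rewrite rcons_path => /andP[]. Qed.

Lemma mul_pred_add_le n K : n <= K -> n * (n - 1) + n <= K * n.
Proof. by case: n => //= n nK; rewrite subn1 -mulnSr leq_mul2r nK orbT. Qed.

Section Graph.
Variables (T : finType) (e : rel T).
Hypotheses (esym : symmetric e) (eirr : irreflexive e).

Definition nbr (S : {set T}) u := [set w in S | e u w].

Lemma clique_sorted (K : {set T}) s : clique e K -> uniq s -> {subset s <= K} -> sorted e s.
Proof.
move=> cK; case: s => [|x p] //=.
elim: p x => [|y p IHp] x //= /andP[xNyp /andP[yNp up]] sK.
apply/andP; split.
  apply: cK; rewrite ?sK ?mem_head ?inE ?eqxx ?orbT //.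
  by apply: contraNneq xNyp => ->; rewrite mem_head.
apply: IHp; first by rewrite yNp up.
by move=> a ap; apply: sK; rewrite inE ap orbT.
Qed.

Lemma cycle_closed_subset (W D : {set T}) c x :
  {in D & W, forall a b, e a b -> b \in D} -> cycle e c -> {subset c <= W} ->
  x \in c -> x \in D -> {subset c <= D}.
Proof.
move=> closedD cc cW /rot_to[i p rot_c] xD z; rewrite -(mem_rot i) rot_c.
have mem_p w : w \in p -> w \in c by move=> wp; rewrite -(mem_rot i) rot_c inE wp orbT.
have : path e x p by move: cc; rewrite -(rot_cycle i) rot_c /= rcons_path => /andP[].
elim: p x xD {rot_c} mem_p => [|y p IHp] x xD mem_p /=; first by rewrite inE => _ /eqP ->.
case/andP=> exy eyp; rewrite inE => /predU1P[-> // |].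
apply: IHp eyp => [|w wp]; last by apply: mem_p; rewrite inE wp orbT.
by apply: (closedD x) => //; apply/cW/mem_p; rewrite mem_head.
Qed.

Section LongestPath.
Variables (k : nat) (W : {set T}).
Hypothesis short_paths : forall s, uniq s -> sorted e s -> {subset s <= W} -> size s <= 2 * k.
Hypothesis min_degree : {in W, forall u, k <= #|nbr W u|}.

Lemma end_closed_path_cycle x p : uniq (x :: p) -> path e x p -> {subset x :: p <= W} ->
  {in W, forall y, e x y -> y \in x :: p} -> {in W, forall y, e (last x p) y -> y \in x :: p} ->
  exists2 c, perm_eq c (x :: p) & cycle e c.
Proof.
move=> up exp pW x_closed l_closed.
have deg_x : k <= count (e x) p.
  apply: leq_trans (min_degree (pW x (mem_head x p))) _.
  apply: card_le_count => w; rewrite inE => /andP[wW xw] //.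
  by have := x_closed w wW xw; rewrite inE => /predU1P[wx|//]; rewrite wx eirr in xw.
have deg_l : k <= count (e^~ (last x p)) (belast x p).
  apply: leq_trans (min_degree (pW _ (mem_last x p))) _.
  apply: card_le_count => w; rewrite inE => /andP[wW lw] /=; last by rewrite esym.
  have := l_closed w wW lw; rewrite lastI mem_rcons inE => /predU1P[wl|//].
  by rewrite wl eirr in lw.
have size_p : size p < k + k by have := short_paths up exp pW; rewrite /= addnn -mul2n.
by have [c] := path_crossing_cycle esym exp (leq_trans size_p (leq_add deg_x deg_l)); exists c.
Qed.

(* Erdos-Gallai: the ends of a longest path through [u] see only path vertices,
   so it closes into a cycle, and by maximality no edge leaves this cycle. *)
Lemma component_cycle u : u \in W ->
  exists c, [/\ uniq c, cycle e c, u \in c, {subset c <= W}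
              & {in c & W, forall a b, e a b -> b \in c}].
Proof.
move=> uW.
pose walk s := [&& uniq s, sorted e s, all (fun w => w \in W) s & u \in s].
have [s walk_s longest] : exists2 s, walk s & forall s', walk s' -> size s' <= size s.
  apply: (@longest_seq _ walk (2 * k) [:: u]); first by rewrite /walk /= uW mem_head.
  by move=> s /and4P[us es /allP sW _]; exact: short_paths.
case/and4P: walk_s; case: s longest => [|x p] // longest up exp sW u_p.
have pW := allP sW; have {}exp : path e x p := exp.
have no_longer s : walk s -> size (x :: p) < size s -> False.
  by move=> /longest; rewrite leqNgt => /negP.
have [c perm_c cyc_c] : exists2 c, perm_eq c (x :: p) & cycle e c.
  apply: end_closed_path_cycle => // y yW exy; apply/negPn/negP => yNp.
    apply: (no_longer (y :: x :: p)) => //.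
    rewrite /walk cons_uniq yNp up /= esym exy exp yW.
    by move: sW; rewrite in_cons u_p orbT /= => ->.
  apply: (no_longer (rcons (x :: p) y)); last by rewrite size_rcons.
  rewrite /walk rcons_uniq yNp up all_rcons yW sW mem_rcons in_cons u_p orbT /=.
  by rewrite rcons_path exp exy.
exists c; split => //; rewrite ?(perm_uniq perm_c) ?(perm_mem perm_c) //.
  by move=> w; rewrite (perm_mem perm_c); exact: pW.
move=> a b a_c bW eab; apply/negPn/negP => bNc.
case/rot_to: a_c => i r rot_c.
have mem_r w : (w \in a :: r) = (w \in x :: p) by rewrite -rot_c mem_rot (perm_mem perm_c).
apply: (no_longer (b :: a :: r)).
  have := cyc_c; rewrite -(rot_cycle i) rot_c /= rcons_path => /andP[ear _].
  rewrite /walk cons_uniq -rot_c rot_uniq (perm_uniq perm_c) up rot_c mem_r.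
  rewrite -(perm_mem perm_c) bNc; apply/and4P; split => //.
  - by rewrite /= esym eab.
  - by apply/allP => w; rewrite in_cons mem_r => /predU1P[-> // | /pW].
  - by rewrite in_cons mem_r u_p orbT.
by have := congr1 size rot_c; rewrite size_rot (perm_size perm_c) /= => ->.
Qed.

End LongestPath.

Section Extremal.
Variables (k : nat) (v : T).

(* [dsum S] is [2 e(G[S]) - d_v] computed in the induced subgraph G[S]. *)
Definition dsum (S : {set T}) := \sum_(u in S :\ v) #|nbr S u|.

Definition sparse (S : {set T}) := dsum S <= (2 * k - 1) * #|S :\ v|.

Definition exceptional_on (S : {set T}) := v \in S /\ exists P : {set {set T}},
  [/\ partition P S,
      (forall B1 B2 x y, B1 \in P -> B2 \in P -> B1 != B2 -> x \in B1 -> y \in B2 -> ~~ e x y),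
      (forall B, B \in P -> v \notin B -> #|B| = 2 * k /\ clique e B)
    & (forall B, B \in P -> v \in B ->
         [/\ #|B| = (2 * k).+1, clique e (B :\ v) & #|nbr S v| = 1])].

Definition cliqueb (D : {set T}) := [forall x in D, forall y in D, (x != y) ==> e x y].

Lemma cliqueP D : reflect (clique e D) (cliqueb D).
Proof.
apply: (iffP forall_inP) => [cD x y xD yD xy | cD x xD].
  by have /forall_inP/(_ y yD)/implyP := cD x xD; apply.
by apply/forall_inP => y yD; apply/implyP; exact: cD.
Qed.

Lemma card_nbr (S : {set T}) u : v \in S -> #|nbr S u| = e u v + #|nbr (S :\ v) u|.
Proof.
move=> vS; rewrite (cardsD1 v) inE vS /=.
by congr (_ + _); apply: eq_card => w; rewrite !inE andbA.
Qed.

Lemma dsum_delete (S : {set T}) u : v \in S -> u \in S -> u != v ->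
  dsum S + e u v = dsum (S :\ u) + 2 * #|nbr S u|.
Proof.
move=> vS uS uv; rewrite /dsum (big_setD1 u) ?inE ?uv //=.
have -> : (S :\ v) :\ u = (S :\ u) :\ v by apply/setP => w; rewrite !inE andbCA.
have nbr_del w : w \in (S :\ u) :\ v -> #|nbr S w| = #|nbr (S :\ u) w| + e w u.
  move=> _; rewrite (cardsD1 u) inE uS addnC.
  by congr (_ + _); apply: eq_card => z; rewrite !inE andbA.
rewrite (eq_bigr _ nbr_del) big_split /= sum_indicator.
have -> : [set w in (S :\ u) :\ v | e w u] = nbr (S :\ v) u.
  apply/setP => w; rewrite !inE esym.
  by case: (eqVneq w u) => [->|_]; rewrite ?eirr ?andbF.
rewrite (card_nbr u vS); lia.
Qed.

Section Component.
Variables (S D : {set T}).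
Hypotheses (vS : v \in S) (DS : D \subset S :\ v).
Hypothesis Dsep : forall a b, a \in D -> b \in S :\: D -> b != v -> ~~ e a b.

Lemma dsum_split : dsum S = dsum (S :\: D) + \sum_(u in D) #|nbr S u|.
Proof.
rewrite /dsum (big_setID D) /= addnC (setIidPr DS).
have -> : (S :\ v) :\: D = (S :\: D) :\ v by apply/setP => w; rewrite !inE andbCA.
congr (_ + _); apply: eq_bigr => u; rewrite !inE => /and3P[uv uND uS].
apply: eq_card => w; rewrite !inE.
case: (boolP (w \in D)) => wD //=; case: (boolP (w \in S)) => wS //=.
by apply/negbTE; rewrite esym; apply: Dsep; rewrite ?inE ?uND ?uS.
Qed.

Lemma nbr_card_in_component u : u \in D ->
  #|nbr S u| + [exists b in D, (b != u) && ~~ e u b] <= (#|D| - 1) + e u v.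
Proof.
move=> uD.
have nbrD : nbr (S :\ v) u \subset D :\ u.
  apply/subsetP => w; rewrite !inE => /andP[/andP[wv wS] uw].
  have -> /= : w != u by apply: contraTneq uw => ->; rewrite eirr.
  by apply: contraTT uw => wND; apply: Dsep; rewrite ?inE ?wND ?wS.
rewrite card_nbr // (cardsD1 u D) uD.
case: existsP => [[b /and3P[bD bu ub]] | _]; last by have := subset_leq_card nbrD; lia.
have nbrDb : nbr (S :\ v) u \subset (D :\ u) :\ b.
  apply/subsetP => w wN; rewrite in_setD1 (subsetP nbrD) // andbT.
  by apply: contraNneq ub => <-; move: wN; rewrite inE => /andP[].
have := subset_leq_card nbrDb; rewrite (cardsD1 b (D :\ u)) !inE bu bD; lia.
Qed.

Lemma component_degree_sum :
  \sum_(u in D) #|nbr S u| + ~~ cliqueb D <= #|D| * (#|D| - 1) + #|[set u in D | e u v]|.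
Proof.
have nonclique : ~~ cliqueb D <= \sum_(u in D) [exists b in D, (b != u) && ~~ e u b].
  case: (boolP (cliqueb D)) => //= /forall_inPn[x xD /forall_inPn[y yD]].
  rewrite negb_imply => xy_nonadj; rewrite (bigD1 x xD) /=.
  by have -> // : [exists b in D, (b != x) && ~~ e x b]; apply/existsP; exists y; rewrite yD eq_sym.
apply: leq_trans (leq_add (leqnn (\sum_(u in D) #|nbr S u|)) nonclique) _; rewrite -big_split /=.
apply: leq_trans (leq_sum _ (fun u uD => nbr_card_in_component uD)) _.
by rewrite big_split /= sum_nat_const sum_indicator mulnC.
Qed.

Lemma component_degree_sum_le : #|D| <= 2 * k ->
  \sum_(u in D) #|nbr S u| <= (2 * k - 1) * #|D| + #|[set u in D | e u v]|.
Proof.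
move=> Dk; have := component_degree_sum.
have : #|D| * (#|D| - 1) <= (2 * k - 1) * #|D| by rewrite mulnC leq_mul2r (leq_sub2r 1 Dk) orbT.
lia.
Qed.

Lemma component_degree_sum_lt : 0 < #|D| -> #|D| <= 2 * k ->
  (#|D| = 2 * k -> #|[set u in D | e u v]| <= 1) -> ~~ ((#|D| == 2 * k) && cliqueb D) ->
  \sum_(u in D) #|nbr S u| + (#|[set u in D | e u v]| == 0) <= (2 * k - 1) * #|D|.
Proof.
move=> D_gt0 Dk m_le1 nonclique.
have m_le : #|[set u in D | e u v]| <= #|D|.
  by apply/subset_leq_card/subsetP => z; rewrite inE => /andP[].
have := component_degree_sum; have [D2k | Dne] := eqVneq #|D| (2 * k).
  have := m_le1 D2k; move: nonclique; rewrite D2k eqxx /= => /negbTE -> /=.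
  by rewrite [_ * (2 * k)]mulnC; case: posnP => //=; lia.
have Dlt : #|D| <= 2 * k - 1 by move: Dk Dne; lia.
by have := mul_pred_add_le Dlt; case: posnP => //=; lia.
Qed.

End Component.

Lemma exceptional_block S : exceptional_on S -> forall u, u \in S -> exists B : {set T},
  [/\ B \subset S, u \in B, (forall w, w \in S -> w \notin B -> ~~ e u w),
      v \in B -> #|B| = (2 * k).+1 /\ clique e (B :\ v)
    & v \notin B -> #|B| = 2 * k /\ clique e B].
Proof.
case=> vS [P [partP sepP blockP vblockP]] u uS.
have uP : u \in cover P by case/and3P: partP => /eqP ->.
exists (pblock P u); split; rewrite ?mem_pblock //.
- exact: partitionS partP (pblock_mem uP).
- move=> w wS wNB; have wP : w \in cover P by case/and3P: partP => /eqP ->.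
  apply: (sepP (pblock P u) (pblock P w)); rewrite ?pblock_mem ?mem_pblock //.
  by apply: contraNneq wNB => ->; rewrite mem_pblock.
- by move=> vB; case: (vblockP _ (pblock_mem uP) vB).
- exact: blockP (pblock_mem uP).
Qed.

Lemma exceptional_nbr_v S : exceptional_on S -> #|nbr S v| = 1.
Proof.
case=> vS [P [partP _ _ vblockP]].
have vP : v \in cover P by case/and3P: partP => /eqP ->.
by case: (vblockP _ (pblock_mem vP)); rewrite ?mem_pblock.
Qed.

Lemma exceptional_clique S y : exceptional_on S -> y \in S -> y != v ->
  exists K : {set T}, [/\ clique e K, #|K| = 2 * k, v \notin K, y \in K & K \subset S].
Proof.
move=> exS yS yv; have [B [BS yB _ vB vNB]] := exceptional_block exS yS.
case: (boolP (v \in B)) => [vinB | /[dup] vNinB /vNB[cardB cB]]; last by exists B.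
have [cardB cB] := vB vinB; exists (B :\ v); split => //.
- by move: cardB; rewrite (cardsD1 v B) vinB; lia.
- by rewrite !inE eqxx.
- by rewrite !inE yv.
- exact: subset_trans (subsetDl _ _) BS.
Qed.

Lemma exceptional_dsum S : exceptional_on S -> dsum S <= (2 * k - 1) * #|S :\ v| + 1.
Proof.
move=> exS; have vS := exS.1.
have deg_u u : u \in S :\ v -> #|nbr S u| <= (2 * k - 1) + e u v.
  rewrite !inE => /andP[uv uS]; have [B [_ uB sepB vB vNB]] := exceptional_block exS uS.
  have nbrB : nbr (S :\ v) u \subset (B :\ u) :\ v.
    apply/subsetP => w; rewrite !inE => /andP[/andP[-> wS] uw] /=.
    have -> /= : w != u by apply: contraTneq uw => ->; rewrite eirr.
    by apply: contraTT uw; apply: sepB.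
  have : #|(B :\ u) :\ v| <= 2 * k - 1.
    have := cardsD1 u B; rewrite uB; case: (boolP (v \in B)) => [vinB | vNinB].
      by rewrite (cardsD1 v (B :\ u)) !inE eq_sym uv vinB; case: (vB vinB); lia.
    by have := subset_leq_card (subsetDl (B :\ u) [set v]); case: (vNB vNinB); lia.
  by rewrite card_nbr //; have := subset_leq_card nbrB; lia.
apply: leq_trans (leq_sum _ deg_u) _.
rewrite big_split /= sum_nat_const sum_indicator mulnC leq_add2l.
rewrite -(exceptional_nbr_v exS) subset_leq_card //.
by apply/subsetP => w; rewrite !inE esym => /andP[/andP[_ ->] ->].
Qed.

Lemma exceptional_add_clique (S D : {set T}) : exceptional_on (S :\: D) -> D \subset S ->
  v \notin D -> clique e D -> #|D| = 2 * k ->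
  (forall a b, a \in D -> b \in S :\: D -> ~~ e a b) -> exceptional_on S.
Proof.
have [-> | D0] := eqVneq D set0; first by rewrite setD0.
case=> vSD [P [partP sepP blockP vblockP]] DS vND cD cardD Dsep.
have vS : v \in S by move: vSD; rewrite inE => /andP[].
have nbr_v : nbr S v = nbr (S :\: D) v.
  apply/setP => w; rewrite !inE; case: (boolP (w \in D)) => //= wD.
  by rewrite esym (negbTE (Dsep w v wD vSD)) andbF.
split => //; exists (D |: P); split.
- have DSD : [disjoint D & S :\: D] by rewrite -setI_eq0 setDE setICA setICr setI0.
  have SD : D :|: S :\: D = S by rewrite -{1}(setIidPr DS) setID.
  by rewrite -SD; exact: partitionU1.
- move=> B1 B2 x y; rewrite !in_setU1 => /predU1P[-> | B1P] /predU1P[-> | B2P] B12 xB1 yB2.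
  + by rewrite eqxx in B12.
  + by apply: Dsep => //; apply: (subsetP (partitionS partP B2P)).
  + by rewrite esym; apply: Dsep => //; apply: (subsetP (partitionS partP B1P)).
  + exact: (sepP B1 B2).
- by move=> B; rewrite in_setU1 => /predU1P[-> | /blockP].
- move=> B; rewrite in_setU1 => /predU1P[-> vB | BP vB]; first by rewrite vB in vND.
  by rewrite nbr_v; apply: vblockP.
Qed.

Lemma exceptional_single_block (S : {set T}) : v \in S ->
  #|S :\ v| = 2 * k -> clique e (S :\ v) -> #|nbr S v| = 1 -> exceptional_on S.
Proof.
move=> vS cardS cS nbr_v; split => //; exists [set S]; split.
- rewrite /partition cover1 trivIset1 eqxx /= in_set1.
  by apply: contraTneq vS => <-; rewrite inE.
- by move=> B1 B2 x y; rewrite !in_set1 => /eqP -> /eqP ->; rewrite eqxx.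
- by move=> B; rewrite in_set1 => /eqP ->; rewrite vS.
- move=> B; rewrite in_set1 => /eqP -> _; split => //.
  by rewrite (cardsD1 v S) vS cardS.
Qed.

Section NoPath.
Hypothesis k_gt1 : 1 < k.
Hypothesis nopath : ~ has_path_avoiding_ends e (2 * k).+1 v.

Lemma path_avoiding_v_short s : uniq s -> sorted e s -> v \notin s -> size s <= 2 * k.
Proof.
move=> us es vNs; rewrite leqNgt; apply/negP => long.
have := take_sorted (2 * k).+1 es; have := take_uniq (2 * k).+1 us.
have size_t : size (take (2 * k).+1 s) = (2 * k).+1 by rewrite size_takel.
have vNt : v \notin take (2 * k).+1 s by apply: contra vNs; exact: mem_take.
case: (take _ s) size_t vNt => [|x p] // size_t vNt ut et.
apply: nopath; exists x, p; split.
- by rewrite /is_path_on size_t eqxx ut.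
- by apply: contraNneq vNt => <-; rewrite mem_head.
- by apply: contraNneq vNt => <-; rewrite mem_last.
Qed.

(* Dropping the first [size q + size t - (2k+1)] vertices leaves a path on
   2k+1 vertices that starts inside [q] and ends where [t] ends. *)
Lemma no_long_path_with_tail (q t : seq T) :
  uniq (q ++ t) -> sorted e (q ++ t) -> v \notin q -> t != [::] -> last v t != v ->
  (2 * k).+1 <= size q + size t -> size t <= 2 * k -> False.
Proof.
move=> uqt eqt vNq t0 lt_v long short_t.
set n := size q + size t - (2 * k).+1.
have nq : n < size q by rewrite /n; lia.
have drop_n : drop n (q ++ t) = nth v q n :: drop n.+1 (q ++ t).
  by rewrite (drop_nth v) ?size_cat; [rewrite nth_cat nq | lia].
apply: nopath; exists (nth v q n), (drop n.+1 (q ++ t)); split.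
- rewrite /is_path_on -drop_n size_drop size_cat drop_uniq //= subKn; last lia.
  by rewrite eqxx; have := drop_sorted n eqt; rewrite drop_n.
- by apply: contraNneq vNq => <-; rewrite mem_nth.
- have := congr1 (last v) (cat_take_drop n (q ++ t)); rewrite last_cat drop_n /= => ->.
  by rewrite last_cat; case: (t) t0 lt_v.
Qed.

(* Run through all of [K], ending at [w], then along [t]. *)
Lemma no_path_leaving_clique (K : {set T}) w t : clique e K -> #|K| = 2 * k ->
  v \notin K -> w \in K -> uniq t -> {in t, forall y, y \notin K} -> path e w t ->
  t != [::] -> last v t != v -> size t <= 2 * k -> False.
Proof.
move=> cK cardK vNK wK ut tNK ewt t0 lt_v short_t.
set q := rem w (enum K).
have qK : {subset rcons q w <= K}.
  by move=> a; rewrite mem_rcons inE => /predU1P[-> // | /mem_rem]; rewrite mem_enum.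
have uq : uniq (rcons q w).
  by rewrite rcons_uniq rem_uniq ?enum_uniq // mem_rem_uniqF ?enum_uniq.
apply: (@no_long_path_with_tail (rcons q w) t) => //.
- rewrite cat_uniq uq ut andbT /=; apply/hasPn => y /tNK.
  by apply: contra => /qK.
- by rewrite cat_rcons sorted_cat_cons ewt andbT (clique_sorted cK).
- by apply: contra vNK => /qK.
- rewrite size_rcons size_rem ?mem_enum // -cardE cardK.
  by case: t t0 {ut tNK ewt lt_v short_t} => //= *; lia.
Qed.

Lemma v_nbr_off_cycle_absurd (x : T) (p : seq T) (z : T) :
  uniq (x :: p) -> path e x (rcons p x) -> v \notin x :: p -> (size p).+1 = 2 * k -> e x v ->
  z \notin x :: p -> z != v -> e v z -> False.
Proof.
move=> uxp cxp vNxp size_xp exv zNxp zv evz.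
apply: (@no_long_path_with_tail (rcons p x) [:: v; z]) => //.
- rewrite cat_uniq rcons_uniq /= !mem_rcons (negbTE vNxp) (negbTE zNxp) inE eq_sym zv.
  by rewrite !andbT; exact: uxp.
- by rewrite cat_rcons sorted_cat_cons (path_sorted cxp) /= exv evz.
- by rewrite mem_rcons.
- by rewrite size_rcons /=; lia.
- by rewrite /=; lia.
Qed.

(* If [z] is the [i]-th vertex after [x], walk back from the vertex before [z]
   to [x], jump to [v] and [z], and go on round the cycle. *)
Lemma v_nbr_on_cycle_absurd (x : T) (p : seq T) (z : T) :
  uniq (x :: p) -> path e x (rcons p x) -> v \notin x :: p -> (size p).+1 = 2 * k ->
  e x v -> z \in p -> e v z -> False.
Proof.
move=> uxp cxp vNxp size_xp exv zp evz.
set i := index z p.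
have ip : i < size p by rewrite index_mem.
have drop_i : drop i p = z :: drop i.+1 p by rewrite (drop_nth v ip) nth_index.
have exp : path e x p by move: cxp; rewrite rcons_path => /andP[].
have [xv vNp] : x != v /\ v \notin p by move: vNxp; rewrite inE negb_or eq_sym => /andP[].
apply: (@no_long_path_with_tail (rev (x :: take i p)) (v :: drop i p)).
- have perm : perm_eq (rev (x :: take i p) ++ v :: drop i p) (v :: x :: p).
    rewrite -(cat1s v (drop i p)) perm_catCA /= perm_cons.
    by rewrite -[in X in perm_eq _ X](cat_take_drop i p) -cat_cons perm_cat2r perm_rev.
  by rewrite (perm_uniq perm) /= vNxp; exact: uxp.
- rewrite sorted_cat_cons -rev_cons (rev_sorted_sym esym) /= esym exv drop_i /= evz.
  have := drop_sorted i (path_sorted exp); rewrite drop_i /= => ->.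
  by rewrite andbT; exact: (take_sorted i.+1 (s := x :: p) exp).
- by rewrite mem_rev inE negb_or eq_sym xv; apply: contra vNp; exact: mem_take.
- by [].
- rewrite drop_i /=; apply: contraNneq vNp => <-.
  by apply: (mem_drop (n0 := i)); rewrite drop_i mem_last.
- by rewrite size_rev /= size_takel ?size_drop; lia.
- by rewrite /= size_drop; lia.
Qed.

Lemma cycle_v_nbr_unique c x z : uniq c -> cycle e c -> v \notin c -> size c = 2 * k ->
  x \in c -> e x v -> e v z -> z = x.
Proof.
move=> uc cc vNc size_c /rot_to[i p rot_c] exv evz; apply/eqP/negPn/negP => zx.
have uxp : uniq (x :: p) by rewrite -rot_c rot_uniq.
have cxp : cycle e (x :: p) by rewrite -rot_c rot_cycle.
have vNxp : v \notin x :: p by rewrite -rot_c mem_rot.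
have size_xp : size (x :: p) = 2 * k by rewrite -rot_c size_rot.
have [zp | zNp] := boolP (z \in p).
  exact: v_nbr_on_cycle_absurd uxp cxp vNxp size_xp exv zp evz.
have zv : z != v by apply: contraTneq evz => ->; rewrite eirr.
by apply: v_nbr_off_cycle_absurd uxp cxp vNxp size_xp exv _ zv evz; rewrite inE negb_or zx.
Qed.

Lemma exceptional_no_outside_nbr S' u y : exceptional_on S' ->
  y \in S' -> y != v -> u \notin S' -> e y u -> False.
Proof.
move=> exS yS yv uNS eyu; have [K [cK cardK vNK yK KS]] := exceptional_clique exS yS yv.
apply: (no_path_leaving_clique cK cardK vNK yK (t := [:: u])) => //=.
- by move=> w; rewrite inE => /eqP ->; apply: contra uNS => /(subsetP KS).
- by rewrite eyu.
- by apply: contraNneq uNS => ->; exact: exS.1.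
- lia.
Qed.

Lemma exceptional_v_no_outside_nbr S' y : exceptional_on S' -> y \notin S' -> e v y -> False.
Proof.
move=> exS yNS evy; have /eqP/cards1P[w nbr_v] := exceptional_nbr_v exS.
have : w \in nbr S' v by rewrite nbr_v set11.
rewrite inE => /andP[wS evw]; have wv : w != v by apply: contraTneq evw => ->; rewrite eirr.
have [K [cK cardK vNK wK KS]] := exceptional_clique exS wS wv.
have yv : y != v by apply: contraTneq evy => ->; rewrite eirr.
apply: (no_path_leaving_clique cK cardK vNK wK (t := [:: v; y])) => //=.
- by rewrite inE eq_sym yv.
- by move=> z; rewrite !inE => /predU1P[-> // | /eqP ->]; apply: contra yNS => /(subsetP KS).
- by rewrite esym evw evy.
- lia.
Qed.

Section Step.
Variable S : {set T}.
Hypothesis vS : v \in S.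
Hypothesis IH : forall S' : {set T}, v \in S' -> #|S'| < #|S| -> sparse S' \/ exceptional_on S'.

Lemma low_degree_sparse u : u \in S :\ v -> 2 * #|nbr S u| <= (2 * k - 1) + e u v -> sparse S.
Proof.
rewrite !inE => /andP[uv uS] low_u.
have vSu : v \in S :\ u by rewrite !inE eq_sym uv vS.
have ltSu : #|S :\ u| < #|S| by rewrite (cardsD1 u S) uS.
have cardW : #|S :\ v| = #|(S :\ u) :\ v| + 1.
  rewrite (cardsD1 u (S :\ v)) !inE uv uS addnC; congr (_ + _).
  by apply: eq_card => w; rewrite !inE andbCA.
have := dsum_delete vS uS uv; rewrite /sparse cardW mulnDr muln1.
case: (IH vSu ltSu) => [sparse_Su | exc_Su]; first by move: sparse_Su; rewrite /sparse; lia.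
have := exceptional_dsum exc_Su.
have [le_u | gt_u] := leqP (2 * #|nbr S u|) (2 * k - 2 + e u v); first lia.
exfalso; have : 0 < #|nbr (S :\ v) u| by move: gt_u; rewrite (card_nbr u vS); lia.
case/card_gt0P => y; rewrite !inE => /andP[/andP[yv yS] uy].
have yu : y != u by apply: contraTneq uy => ->; rewrite eirr.
apply: (exceptional_no_outside_nbr exc_Su (y := y) (u := u)); rewrite ?inE ?eqxx ?yu ?yS //.
by rewrite esym.
Qed.


Lemma remove_block (D : {set T}) : D \subset S :\ v -> 0 < #|D| -> #|D| <= 2 * k ->
  (forall a b, a \in D -> b \in S :\: D -> b != v -> ~~ e a b) ->
  (#|D| = 2 * k -> #|[set u in D | e u v]| <= 1) ->
  [\/ sparse S, exceptional_on S |
      [/\ #|D| = 2 * k, clique e D & exists2 x, x \in D & e x v]].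
Proof.
move=> DW D_gt0 Dk Dsep m_le1; set m := #|[set u in D | e u v]|.
have vND : v \notin D by apply/negP => /(subsetP DW); rewrite !inE eqxx.
have vSD : v \in S :\: D by rewrite !inE vS vND.
have ltSD : #|S :\: D| < #|S|.
  have [x0 x0D] := card_gt0P D_gt0; apply/proper_card/properP; split; first exact: subsetDl.
  by exists x0; rewrite ?inE ?x0D //; have := subsetP DW x0 x0D; rewrite !inE => /andP[].
have cardW : #|S :\ v| = #|(S :\: D) :\ v| + #|D|.
  rewrite -(cardsID D (S :\ v)) (setIidPr DW) addnC; congr (_ + _).
  by apply: eq_card => z; rewrite !inE andbCA.
have sum_lt := component_degree_sum_lt vS DW Dsep D_gt0 Dk m_le1.
have sparse_S d : dsum (S :\: D) <= (2 * k - 1) * #|(S :\: D) :\ v| + d ->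
    \sum_(u in D) #|nbr S u| + d <= (2 * k - 1) * #|D| -> sparse S.
  by rewrite /sparse (dsum_split DW Dsep) cardW mulnDr; lia.
have no_v_nbr : exceptional_on (S :\: D) -> m = 0.
  move=> exS'; apply/eqP; rewrite cards_eq0; apply/eqP/setP => y; rewrite !inE.
  apply/negbTE/negP => /andP[yD yv]; apply: (exceptional_v_no_outside_nbr exS' (y := y)).
    by rewrite in_setD negb_and negbK yD.
  by rewrite esym.
have [/andP[/eqP D2k /cliqueP cD] | nonclique] := boolP ((#|D| == 2 * k) && cliqueb D).
  case: (IH vSD ltSD) => [sparse_SD | exc_SD].
    have [m0 | /card_gt0P[x]] := posnP m; last first.
      by rewrite inE => /andP[xD xv]; constructor 3; split => //; exists x.
    constructor 1; apply: (sparse_S 0); rewrite addn0 //.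
    by have := component_degree_sum_le vS DW Dsep Dk; rewrite -/m m0 addn0.
  constructor 2; apply: (exceptional_add_clique exc_SD) => //.
  - exact: subset_trans DW (subsetDl _ _).
  - move=> a b aD bSD; have [-> | bv] := eqVneq b v; last exact: Dsep.
    apply/negP => av; suff : 0 < m by rewrite (no_v_nbr exc_SD).
    by apply/card_gt0P; exists a; rewrite inE aD av.
case: (IH vSD ltSD) => [sparse_SD | exc_SD].
  constructor 1; apply: (sparse_S 0); rewrite ?addn0 //.
  by apply: leq_trans (sum_lt nonclique); rewrite leq_addr.
constructor 1; apply: (sparse_S 1 (exceptional_dsum exc_SD)).
by have := sum_lt nonclique; rewrite -/m (no_v_nbr exc_SD).
Qed.

Lemma remove_component (c : seq T) x0 :
  uniq c -> cycle e c -> x0 \in c -> {subset c <= S :\ v} ->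
  {in c & S :\ v, forall a b, e a b -> b \in c} ->
  [\/ sparse S, exceptional_on S |
      [/\ size c = 2 * k, clique e [set z in c] & exists2 x, x \in c & e x v]].
Proof.
move=> uc cc x0c cW closed_c.
have cardD : #|[set z in c]| = size c by rewrite cardsE; apply/card_uniqP.
have vNc : v \notin c by apply/negP => /cW; rewrite !inE eqxx.
have Dk : #|[set z in c]| <= 2 * k by rewrite cardD path_avoiding_v_short ?(cycle_sorted cc).
have DW : [set z in c] \subset S :\ v by apply/subsetP => z; rewrite inE; exact: cW.
have D_gt0 : 0 < #|[set z in c]| by apply/card_gt0P; exists x0; rewrite inE.
have Dsep a b : a \in [set z in c] -> b \in S :\: [set z in c] -> b != v -> ~~ e a b.
  rewrite !inE => ac /andP[bNc bS] bv; apply: contraNN bNc.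
  by apply: closed_c; rewrite ?inE ?bv.
have m_le1 : #|[set z in c]| = 2 * k -> #|[set u in [set z in c] | e u v]| <= 1.
  rewrite cardD => size_c; rewrite leqNgt; apply/negP => /card_gt1P[a [b [aD bD ab]]].
  move: aD bD; rewrite !inE => /andP[ac av] /andP[bc bv].
  have evb : e v b by rewrite esym.
  by move: ab; rewrite (cycle_v_nbr_unique uc cc vNc size_c ac av evb) eqxx.
case: (remove_block DW D_gt0 Dk Dsep m_le1) => [||[size_c cD [x]]];
  [by constructor 1 | by constructor 2 |].
by rewrite inE => xc xv; constructor 3; split; rewrite -?cardD //; exists x.
Qed.

Lemma sparse_or_exceptional_step : sparse S \/ exceptional_on S.
Proof.
set W := S :\ v.
have vNW : v \notin W by rewrite !inE eqxx.
have [/exists_inP[u uW low_u] | /exists_inP high] :=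
  boolP [exists u in W, 2 * #|nbr S u| <= (2 * k - 1) + e u v].
  by left; exact: low_degree_sparse uW low_u.
have min_deg : {in W, forall u, k <= #|nbr W u|}.
  move=> u uW; have : ~~ (2 * #|nbr S u| <= 2 * k - 1 + e u v).
    by apply/negP => low_u; apply: high; exists u.
  by have := card_nbr u vS; rewrite -/W; lia.
have short s : uniq s -> sorted e s -> {subset s <= W} -> size s <= 2 * k.
  by move=> us es sW; apply: path_avoiding_v_short => //; apply: contra vNW => /sW.
have [W0 | [u0 u0W]] := set_0Vmem W; first by left; rewrite /sparse /dsum -/W W0 big_set0.
have [c [uc cc u0c cW closed_c]] := component_cycle short min_deg u0W.
case: (remove_component uc cc u0c cW closed_c) => [||[size_c cD [x xc xv]]];
  [by left | by right |].
have vNc : v \notin c by apply: contra vNW => /cW.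
have nbr_v : nbr S v = [set x].
  apply/setP => w; rewrite !inE; apply/andP/eqP => [[_ evw] | ->].
    exact: cycle_v_nbr_unique uc cc vNc size_c xc xv evw.
  by rewrite esym xv (subsetP (subsetDl S [set v])) ?cW.
have [Wc | /subsetPn[u1 u1W u1Nc]] := boolP (W \subset [set z in c]).
  have Wc' : W = [set z in c].
    by apply/eqP; rewrite eqEsubset Wc; apply/subsetP => z; rewrite inE => /cW.
  right; apply: exceptional_single_block; rewrite ?nbr_v ?cards1 -/W ?Wc' //.
  by rewrite cardsE (card_uniqP uc).
have [c' [uc' cc' u1c' cW' closed_c']] := component_cycle short min_deg u1W.
case: (remove_component uc' cc' u1c' cW' closed_c') => [||[_ _ [x' x'c' x'v]]];
  [by left | by right |].
have x'x : x' = x.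
  by apply/set1P; rewrite -nbr_v !inE esym x'v (subsetP (subsetDl S [set v])) ?cW'.
have closed_D : {in [set z in c] & W, forall a b, e a b -> b \in [set z in c]}.
  by move=> a b; rewrite inE => ac bW eab; rewrite inE (closed_c a b).
have x_c' : x \in c' by rewrite -x'x.
have x_D : x \in [set z in c] by rewrite inE.
by move: u1Nc; rewrite (cycle_closed_subset closed_D cc' cW' x_c' x_D u1c').
Qed.

End Step.

Lemma sparse_or_exceptional (S : {set T}) : v \in S -> sparse S \/ exceptional_on S.
Proof.
elim: {S}#|S| {-2}S (leqnn #|S|) => [|n IHn] S cardS vS.
  by move: cardS; rewrite leqn0 cards_eq0 => /eqP S0; rewrite S0 inE in vS.
apply: sparse_or_exceptional_step => // S' vS' ltS'; apply: IHn => //; lia.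
Qed.

End NoPath.
End Extremal.
End Graph.

Lemma handshake (T : finType) (e : rel T) : symmetric e -> irreflexive e ->
  2 * num_edges e = \sum_u deg e u.
Proof.
move=> esym eirr.
set E := [set A : {set T} | [exists x, exists y, e x y && (A == [set x; y])]].
have deg_E u : deg e u = \sum_(A in E) (u \in A : nat).
  rewrite sum_indicator /deg.
  have -> : [set A in E | u \in A] = (fun w => [set u; w]) @: [set w | e u w].
    apply/setP => A; rewrite inE; apply/andP/imsetP.
    - case; rewrite inE => /existsP[x /existsP[y /andP[exy /eqP ->]]].
      rewrite !inE => /orP[] /eqP ->; first by exists y; rewrite ?inE.
      by exists x; rewrite ?inE 1?esym // setUC.
    - case=> w; rewrite inE => euw ->; split; last by rewrite !inE eqxx.
      by rewrite inE; apply/existsP; exists u; apply/existsP; exists w; rewrite euw eqxx.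
  rewrite card_in_imset // => w1 w2; rewrite !inE => euw1 _ eq12.
  have : w1 \in [set u; w2] by rewrite -eq12 !inE eqxx orbT.
  rewrite !inE => /orP[/eqP w1u | /eqP //].
  by rewrite w1u eirr in euw1.
rewrite (eq_bigr _ (fun u _ => deg_E u)) exchange_big /=.
rewrite (eq_bigr (fun _ => 2)) ?sum_nat_const 1?mulnC // => A.
rewrite inE => /existsP[x /existsP[y /andP[exy /eqP ->]]].
have -> : \sum_u (u \in [set x; y] : nat) = #|[set x; y]|.
  by rewrite -sum1_card [RHS]big_mkcond.
by rewrite cards2; case: (eqVneq x y) exy => [-> | //]; rewrite eirr.
Qed.

Theorem lemma2 (k : nat) (T : finType) (e : rel T) (v : T) :
  2 <= k ->
  simple_graph e ->
  ~ has_path_avoiding_ends e (2 * k).+1 v ->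
  (2 * num_edges e - deg e v <= (2 * k - 1) * (#|T| - 1))%N
  \/ exceptional_graph e k v.
Proof.
move=> hk [esym eirr] nopath.
have vT : v \in [set: T] by rewrite inE.
case: (sparse_or_exceptional esym eirr hk nopath vT) => [sparseT | [_ [P [partP sepP blockP vblockP]]]].
  have cardTv : #|[set: T] :\ v| = #|T| - 1.
    by rewrite -cardsT (cardsD1 v [set: T]) vT add1n subn1.
  left; move: sparseT; rewrite /sparse cardTv.
  suff -> : dsum e v [set: T] = 2 * num_edges e - deg e v by [].
  rewrite handshake // (bigD1 v) //= addKn /dsum; apply: eq_big => [u | u _].
    by rewrite !inE andbT.
  by apply: eq_card => w; rewrite !inE.
right; exists P; split => // B BP vB; have [cardB cB nbr_v] := vblockP B BP vB; split => //.
by rewrite -nbr_v; apply: eq_card => w; rewrite !inE.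
Qed.
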